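(* Let $t\in[n]$ and let $S\subseteq N$ be $t$-switchable. Then the ideals $\tilde{\mathcal{I}}^{\langle t\rangle}_S$ and $P^{\langle t\rangle}_S$ of $R$ are prime.
   Context: Fix positive integers $n, r_1,\dots,r_n$, let $N=[r_1]\times\cdots\times[r_n]$, and let $R$ be the polynomial ring over a field in the variables $x_a$, $a\in N$. For $a,b\in N$ and $i\in[n]$, ${\rm s}(i,a,b)\in N$ has $i$-th component $b_i$ and other components equal to those of $a$. Let $d(a,b)=\#\{j: a_j\neq b_j\}$ and $f_{i,a,b}=x_ax_b-x_{{\rm s}(i,a,b)}x_{{\rm s}(i,b,a)}$. A subset $S\subseteq N$ is $t$-switchable if for all $a,b\in S$ with $d(a,b)=2$ and all $i\in[t]$, ${\rm s}(i,a,b)\in S$. Elements $a,b\in S$ are connected in $S$ if there are $a_0=a,\dots,a_k=b$ in $S$ with $d(a_{j-1},a_j)\le 1$ for all $j$. Set $\tilde{\mathcal{I}}^{\langle t\rangle}_S=(f_{i,a,b}: i\in[t],\ a,b \text{ connected in } S)$, $\mathrm{Var}^{\langle t\rangle}_S=(x_a: a\notin S)$, $P^{\langle t\rangle}_S=\mathrm{Var}^{\langle t\rangle}_S+\tilde{\mathcal{I}}^{\langle t\rangle}_S$. *)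

From HB Require Import structures.
From mathcomp Require Import all_boot all_order all_algebra.
From mathcomp Require Import mpoly.
Set Implicit Arguments. Unset Strict Implicit. Unset Printing Implicit Defensive.
Import GRing.Theory.
Local Open Scope ring_scope.

(* The index set N = [r_1] x ... x [r_n], with 0-based coordinates:
   a : N assigns to each i : 'I_n a value a i : 'I_(r i). *)
Definition Nset (n : nat) (r : 'I_n -> nat) : finType :=
  {dffun forall i : 'I_n, 'I_(r i)}.

Definition swt n (r : 'I_n -> nat) (i : 'I_n) (a b : Nset r) : Nset r :=
  [ffun j => if j == i then b j else a j].

Definition dist n (r : 'I_n -> nat) (a b : Nset r) : nat :=
  #|[set j | a j != b j]|.

(* S is t-switchable; i ∈ [t] corresponds to the 0-based index i < t *)
Definition switchable n (r : 'I_n -> nat) (t : nat) (S : {set Nset r}) : Prop :=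
  forall a b, a \in S -> b \in S -> dist a b = 2%N ->
  forall i : 'I_n, (i < t)%N -> swt i a b \in S.

Definition connected_in n (r : 'I_n -> nat) (S : {set Nset r}) (a b : Nset r) : Prop :=
  exists p : seq (Nset r),
    [/\ all (fun x => x \in S) (a :: p),
        path (fun x y => (dist x y <= 1)%N) a p & last a p = b].

(* The polynomial ring R = F[x_a : a ∈ N]; variable x_a is 'X_(enum_rank a). *)
Definition polyR (F : fieldType) n (r : 'I_n -> nat) :=
  {mpoly F[#|Nset r|]}.

Definition xv (F : fieldType) n (r : 'I_n -> nat) (a : Nset r) : polyR F r :=
  'X_(enum_rank a).

Arguments xv F {n r} a.

Definition fbin (F : fieldType) n (r : 'I_n -> nat) (i : 'I_n) (a b : Nset r)
  : polyR F r :=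
  xv F a * xv F b - xv F (swt i a b) * xv F (swt i b a).

Arguments fbin F {n r} i a b.

Definition ideal_gen (A : comNzRingType) (G : A -> Prop) : A -> Prop :=
  fun p => exists s : seq (A * A),
    (forall q, q \in s -> G q.2) /\ p = \sum_(q <- s) q.1 * q.2.

Definition ideal_add (A : comNzRingType) (I J : A -> Prop) : A -> Prop :=
  fun p => exists u v, [/\ I u, J v & p = u + v].

Definition prime_ideal (A : comNzRingType) (I : A -> Prop) : Prop :=
  ~ I 1 /\ forall a b, I (a * b) -> I a \/ I b.

Definition Itilde (F : fieldType) n (r : 'I_n -> nat) (t : nat) (S : {set Nset r})
  : polyR F r -> Prop :=
  ideal_gen (fun g => exists (i : 'I_n) (a b : Nset r),
    [/\ (i < t)%N, connected_in S a b & g = fbin F i a b]).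

Arguments Itilde F {n r} t S _.

Definition VarS (F : fieldType) n (r : 'I_n -> nat) (S : {set Nset r})
  : polyR F r -> Prop :=
  ideal_gen (fun g => exists a : Nset r, a \notin S /\ g = xv F a).

Arguments VarS F {n r} S _.

Definition PS (F : fieldType) n (r : 'I_n -> nat) (t : nat) (S : {set Nset r})
  : polyR F r -> Prop :=
  ideal_add (VarS F S) (Itilde F t S).

Arguments PS F {n r} t S _.

From HB Require Import structures.
From mathcomp Require Import all_boot all_order all_algebra.
From mathcomp Require Import mpoly.
From mathcomp Require Import zify.
Set Implicit Arguments. Unset Strict Implicit. Unset Printing Implicit Defensive.
Import GRing.Theory.
Local Open Scope ring_scope.

(* Both ideals are toric.  Give each a \notin S a private token, and each
   a \in S, lying in the connected component C of S (for d(a,b) <= 1), the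
   token (C, (a_j)_{j >= t}) together with one token (C, i, a_i) for each i < t.
   Sending x_a to the product of the variables of its tokens is a monomial map
   into a polynomial ring.  Switching a coordinate i < t between connected a
   and b keeps s(i,a,b) and s(i,b,a) in S and in C (this is where
   switchability is used) and permutes the tokens, so the generators of
   \tilde I lie in the kernel.  Conversely, if two monomials carry the same
   tokens, any variable x_b of the second one can be made to divide the first
   modulo \tilde I: take a factor x_a with the tail token of b, and fix its
   coordinates i < t one at a time by switching with a factor carrying the
   token (C, i, b_i).  Cancelling x_b and inducting on the degree shows that
   the kernel is \tilde I, which is therefore prime; P_S is the preimage of
   \tilde I under x_a |-> 0 for a \notin S, hence prime as well. *)

Lemma sum_nat_gt0P (I : finType) (P : pred I) (f : I -> nat) :
  (0 < \sum_(i | P i) f i)%N -> exists2 i, P i & (0 < f i)%N.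
Proof.
rewrite lt0n sum_nat_eq0 => /forallPn[i].
by rewrite negb_imply -lt0n => /andP[Pi fi]; exists i.
Qed.

Lemma submU1K k (m : 'X_{1..k}) i : (0 < m i)%N -> (m - U_(i) + U_(i))%MM = m.
Proof. by move=> mi; rewrite submK // lep1mP -lt0n. Qed.

Section IdealGen.
Variables (A : comNzRingType) (G : A -> Prop).

Lemma ideal_gen0 : ideal_gen G 0.
Proof. by exists [::]; rewrite big_nil. Qed.

Lemma ideal_gen_mem g : G g -> ideal_gen G g.
Proof.
by move=> Gg; exists [:: (1, g)]; rewrite big_seq1 mul1r; split=> // q /[!inE] /eqP->.
Qed.

Lemma ideal_genD p q : ideal_gen G p -> ideal_gen G q -> ideal_gen G (p + q).
Proof.
case=> s1 [h1 ->] [s2 [h2 ->]]; exists (s1 ++ s2); rewrite big_cat; split=> // x.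
by rewrite mem_cat => /orP[/h1 | /h2].
Qed.

Lemma ideal_genMl c p : ideal_gen G p -> ideal_gen G (c * p).
Proof.
case=> s [h ->]; exists [seq (c * q.1, q.2) | q <- s]; split.
  by move=> q /mapP[q' /h ? ->].
by rewrite big_map mulr_sumr; apply: eq_bigr => q _; rewrite mulrA.
Qed.

Lemma ideal_gen_sum (I : eqType) (s : seq I) (f : I -> A) :
  (forall i, i \in s -> ideal_gen G (f i)) -> ideal_gen G (\sum_(i <- s) f i).
Proof.
elim: s => [|x s IH] h; first by rewrite big_nil; apply: ideal_gen0.
rewrite big_cons; apply: ideal_genD; first by apply: h; rewrite mem_head.
by apply: IH => i si; apply: h; rewrite inE si orbT.
Qed.

Lemma ideal_genB_trans p q s :
  ideal_gen G (p - q) -> ideal_gen G (q - s) -> ideal_gen G (p - s).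
Proof. by move=> /ideal_genD/[apply]; rewrite addrA subrK. Qed.

End IdealGen.

Lemma ideal_gen_map (A B : comNzRingType) (G : A -> Prop) (H : B -> Prop) (f : {rmorphism A -> B}) p :
  (forall g, G g -> ideal_gen H (f g)) -> ideal_gen G p -> ideal_gen H (f p).
Proof.
move=> hG [s [hs ->]]; rewrite rmorph_sum; apply: ideal_gen_sum => q qs.
by rewrite rmorphM; apply/ideal_genMl/hG/hs.
Qed.

Lemma ideal_gen_eq0 (A : comNzRingType) (B : nzRingType) (G : A -> Prop) (f : {rmorphism A -> B}) p :
  (forall g, G g -> f g = 0) -> ideal_gen G p -> f p = 0.
Proof.
move=> hG [s [hs ->]]; rewrite rmorph_sum big1_seq // => q /andP[_ qs].
by rewrite rmorphM (hG _ (hs _ qs)) mulr0.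
Qed.

Lemma prime_ideal_kernel (A : comNzRingType) (D : idomainType)
    (f : {rmorphism A -> D}) (I : A -> Prop) :
  (forall p, I p <-> f p = 0) -> prime_ideal I.
Proof.
move=> hI; split; first by move/hI/eqP; rewrite rmorph1 oner_eq0.
by move=> a b /hI/eqP; rewrite rmorphM mulf_eq0 => /orP[] /eqP/hI; auto.
Qed.

Lemma prime_ideal_preimage (A B : comNzRingType) (f : {rmorphism A -> B})
    (I : B -> Prop) (J : A -> Prop) :
  prime_ideal I -> (forall p, J p <-> I (f p)) -> prime_ideal J.
Proof.
move=> [I1 Iprime] hJ; split; first by move/hJ; rewrite rmorph1.
by move=> a b /hJ; rewrite rmorphM => /Iprime[] /hJ; auto.
Qed.

Section MonomialSubst.
Variables (F : fieldType) (k l : nat) (c : 'I_k -> 'I_l -> nat).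
Implicit Types (m : 'X_{1..k}) (p : {mpoly F[k]}).

Definition mexp (m : 'X_{1..k}) : 'X_{1..l} :=
  [multinom (\sum_(i < k) m i * c i j)%N | j < l].

Lemma mexpE m j : mexp m j = (\sum_i m i * c i j)%N.
Proof. by rewrite mnmE. Qed.

Lemma mexp0 : mexp 0%MM = 0%MM.
Proof. by apply/mnmP=> j; rewrite mexpE mnm0E big1 // => i _; rewrite mnm0E. Qed.

Lemma mexpD m1 m2 : mexp (m1 + m2)%MM = (mexp m1 + mexp m2)%MM.
Proof.
apply/mnmP=> j; rewrite mnmDE !mexpE -big_split /=.
by apply: eq_bigr => i _; rewrite mnmDE mulnDl.
Qed.

Lemma mexpU i j : mexp U_(i) j = c i j.
Proof.
rewrite mexpE (bigD1 i) //= mnm1E eqxx mul1n big1 ?addn0 // => i' ne_i'i.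
by rewrite mnm1E eq_sym (negbTE ne_i'i).
Qed.

Lemma leq_mexp m i j : (m i * c i j <= mexp m j)%N.
Proof. by rewrite mexpE (bigD1 i) //= leq_addr. Qed.

Lemma mexp_gt0 m j : (0 < mexp m j)%N -> exists2 i, (0 < m i)%N & (0 < c i j)%N.
Proof.
by rewrite mexpE => /sum_nat_gt0P[i _]; rewrite muln_gt0 => /andP[mi ci]; exists i.
Qed.

Definition msubst : k.-tuple {mpoly F[l]} := [tuple 'X_[mexp U_(i)] | i < k].

Lemma msubstX m : 'X_[m] \mPo msubst = 'X_[mexp m].
Proof.
rewrite comp_mpolyX (eq_bigr (fun i => 'X_[mexp U_(i)] ^+ m i)); last first.
  by move=> i _; rewrite tnth_mktuple.
rewrite mprodXnE; congr 'X_[_]; apply/mnmP=> j; rewrite mnm_sumE mexpE.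
by apply: eq_bigr => i _; rewrite mulmnE mexpU mulnC.
Qed.

Lemma mcoeff_msubst p nu :
  (p \mPo msubst)@_nu = \sum_(m <- msupp p) p@_m * (mexp m == nu)%:R.
Proof.
rewrite comp_mpolyEX raddf_sum /=; apply: eq_bigr => m _.
by rewrite mcoeffZ msubstX mcoeffX.
Qed.

Lemma msubst_kernel (G : {mpoly F[k]} -> Prop) p :
  (forall m m', mexp m = mexp m' -> ideal_gen G ('X_[m] - 'X_[m'])) ->
  p \mPo msubst = 0 -> ideal_gen G p.
Proof.
move=> fiberG p0; set s := msupp p.
pose rep nu := nth 0%MM s (find (fun m => mexp m == nu) s).
have mexp_rep m : m \in s -> mexp (rep (mexp m)) = mexp m.
  move=> ms; apply/eqP; apply: (nth_find _ (a := fun m' => mexp m' == mexp m)).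
  by apply/hasP; exists m.
(* Q moves every monomial of p to the representative of its fibre under mexp,
   so its coefficients are those of p \mPo msubst. *)
pose Q := \sum_(m <- s) p@_m *: 'X_[rep (mexp m)].
have Q0 : Q = 0.
  apply/mpolyP=> mu; rewrite mcoeff0 raddf_sum /=.
  under eq_bigr => m _ do rewrite mcoeffZ mcoeffX.
  have [/hasP[m1 m1s /eqP <-]|/hasPn rep_mu] := boolP (has (fun m => rep (mexp m) == mu) s).
    rewrite -[RHS](mcoeff0 _ (mexp m1)) -p0 mcoeff_msubst.
    apply: eq_big_seq => m ms; congr (_ * (nat_of_bool _)%:R).
    apply/idP/idP => [/eqP eq_rep|/eqP-> //].
    by rewrite -(mexp_rep m ms) eq_rep mexp_rep.
  by rewrite big1_seq // => m /andP[_ /rep_mu/negbTE->]; rewrite mulr0.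
have -> : p = \sum_(m <- s) p@_m *: ('X_[m] - 'X_[rep (mexp m)]) + Q.
  rewrite /Q -big_split /= {1}(mpolyE p); apply: eq_bigr => m _.
  by rewrite scalerBr subrK.
rewrite Q0 addr0; apply: ideal_gen_sum => m ms; rewrite -mul_mpolyC.
by apply/ideal_genMl/fiberG; rewrite mexp_rep.
Qed.

End MonomialSubst.

Section SwitchableSet.
Variables (n : nat) (r : 'I_n -> nat) (t : nat) (S : {set Nset r}).
Hypothesis hS : switchable t S.
Implicit Types (a b x y z : Nset r) (i j : 'I_n).

Lemma swtE i x y j : swt i x y j = if j == i then y j else x j.
Proof. by rewrite ffunE. Qed.

Lemma swtxx i x : swt i x x = x.
Proof. by apply/ffunP=> j; rewrite swtE; case: eqP => // ->. Qed.

Lemma dist_sym x y : dist x y = dist y x.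
Proof. by apply: eq_card => j; rewrite !inE eq_sym. Qed.

Lemma dist_eq0 x y : dist x y = 0%N -> x = y.
Proof.
move/eqP; rewrite cards_eq0 => /eqP xy0; apply/ffunP => j; apply/eqP.
by apply: contraT => ne_xy; have := in_set0 j; rewrite -xy0 inE ne_xy.
Qed.

Lemma dist_swt i x y : (dist x (swt i x y) <= 1)%N.
Proof.
rewrite -(cards1 i); apply/subset_leq_card/subsetP=> j; rewrite !inE swtE.
by case: (eqVneq j i) => [->|]; rewrite ?eqxx.
Qed.

Definition adj : rel (Nset r) := fun x y => [&& x \in S, y \in S & (dist x y <= 1)%N].

Lemma connect_adj_sym : connect_sym adj.
Proof. by apply: sym_connect_sym => x y; rewrite /adj dist_sym andbCA. Qed.

Lemma path_adj_mem x p : x \in S -> path adj x p -> all (fun y => y \in S) (x :: p).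
Proof.
elim: p x => [|y p IH] x xS /=; first by rewrite xS.
by case/andP => /and3P[_ yS _] /(IH _ yS); rewrite xS.
Qed.

Lemma connect_adj_mem x y : x \in S -> connect adj x y -> y \in S.
Proof.
by move=> xS /connectP[p /(path_adj_mem xS)/allP xpS ->]; apply/xpS/mem_last.
Qed.

Lemma connected_inP a b : connected_in S a b <-> a \in S /\ connect adj a b.
Proof.
split=> [[p [/= /andP[aS pS] ap <-]] | [aS /connectP[p ap ->]]].
  split=> //; apply/connectP; exists p => //.
  elim: p a aS pS ap => //= y p IH a aS /andP[yS pS] /andP[ay yp].
  by rewrite /adj aS yS ay /= IH.
exists p; split=> //; first exact: path_adj_mem.
elim: p a aS ap => //= y p IH a aS /andP[/and3P[_ yS ay] yp].
by rewrite ay /= IH.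
Qed.

(* If z is adjacent to x, then x, z differ at most at one coordinate j: either
   j = i and the switches agree, or x and s(i,z,y) are at distance 2. *)
Lemma swt_adj_mem i x z y : (i < t)%N -> x \in S -> adj x z ->
  swt i z y \in S -> swt i x y \in S.
Proof.
move=> it xS /and3P[_ zS dxz] zyS.
have [/dist_eq0 -> //|/eqP/cards1P[j xzj]] : dist x z = 0%N \/ dist x z = 1%N.
  by case: (dist x z) dxz => [|[|]]; auto.
have ne_xz k : (x k != z k) = (k == j) by rewrite -[k == j]in_set1 -xzj inE.
have [eq_ji|ne_ji] := eqVneq j i; first subst j.
  suff -> : swt i x y = swt i z y by [].
  apply/ffunP=> k; rewrite !swtE.
  by case: eqP => // /eqP ne_ki; apply/eqP; rewrite -[_ == _]negbK ne_xz ne_ki.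
have [xy|ne_xy] := eqVneq (x i) (y i).
  suff -> : swt i x y = x by [].
  by apply/ffunP=> k; rewrite swtE; case: eqP => // ->.
have d2 : dist x (swt i z y) = 2%N.
  rewrite /dist (_ : [set k | _] = [set i; j]) ?cards2 1?eq_sym ?ne_ji //.
  apply/setP=> k; rewrite !inE swtE.
  by case: (eqVneq k i) => [->|_]; rewrite ?ne_xy // ne_xz.
suff <- : swt i x (swt i z y) = swt i x y by apply: hS.
by apply/ffunP=> k; rewrite !swtE; case: eqP.
Qed.

Lemma swt_connect_mem i x y : (i < t)%N -> x \in S -> connect adj x y ->
  swt i x y \in S.
Proof.
move=> it xS /connectP[p xp ->]; elim: p x xS xp => [|z p IH] x xS /=.
  by rewrite swtxx.
case/andP=> xz zp; have /and3P[_ zS _] := xz.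
exact: swt_adj_mem it xS xz (IH _ zS zp).
Qed.

Lemma connect_swt i x y : (i < t)%N -> x \in S -> connect adj x y ->
  connect adj x (swt i x y).
Proof.
by move=> it xS xy; apply: connect1; rewrite /adj xS swt_connect_mem ?dist_swt.
Qed.

Definition comp x : Nset r := fingraph.root adj x.

Lemma comp_connect x y : connect adj x y -> comp x = comp y.
Proof. by move=> xy; apply/eqP; rewrite root_connect //; apply: connect_adj_sym. Qed.

Lemma connect_comp x y : comp x = comp y -> connect adj x y.
Proof. by move=> /eqP; rewrite root_connect //; apply: connect_adj_sym. Qed.

Definition tail x : Nset r := [ffun j : 'I_n => if (j < t)%N then comp x j else x j].

Definition token : finType := (bool * option 'I_n * Nset r * Nset r)%type.

Definition tok_out x : token := (false, None, x, x).
Definition tok_tail x : token := (true, None, comp x, tail x).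
Definition tok_coord i x : token := (true, Some i, comp x, swt i (comp x) x).

Definition tok_mult x (tau : token) : nat :=
  if x \in S then
    ((tau == tok_tail x) + \sum_(i : 'I_n | (i < t)%N) (tau == tok_coord i x))%N
  else tau == tok_out x.

Lemma tok_mult_swt i x y tau : (i < t)%N -> x \in S -> connect adj x y ->
  (tok_mult (swt i x y) tau + tok_mult (swt i y x) tau
   = tok_mult x tau + tok_mult y tau)%N.
Proof.
move=> it xS xy; have yS := connect_adj_mem xS xy.
have yx : connect adj y x by rewrite connect_adj_sym.
set s := swt i x y; set s' := swt i y x.
have cs : comp s = comp x by rewrite -(comp_connect (connect_swt it xS xy)).
have cs' : comp s' = comp y by rewrite -(comp_connect (connect_swt it yS yx)).
have [tls tls'] : tail s = tail x /\ tail s' = tail y.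
  by split; apply/ffunP=> j; rewrite !ffunE ?cs ?cs';
    case: ifP => // jt; case: eqP => // ji; rewrite ji it in jt.
rewrite /tok_mult xS yS !swt_connect_mem // /tok_tail /tok_coord.
rewrite cs cs' tls tls' -(comp_connect xy).
rewrite addnACA [RHS]addnACA -!big_split /=; congr (_ + _)%N.
apply: eq_bigr => j _; set X := comp x.
have [swt_s swt_s'] : swt j X s = swt j X (if j == i then y else x) /\
                      swt j X s' = swt j X (if j == i then x else y).
  by split; apply/ffunP=> k; rewrite !swtE; case: eqP => // ->; case: eqP.
by rewrite swt_s swt_s'; case: (j == i); rewrite // addnC.
Qed.

Lemma tok_mult_out x : x \notin S -> (0 < tok_mult x (tok_out x))%N.
Proof. by rewrite /tok_mult => /negbTE->; rewrite eqxx. Qed.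

Lemma tok_mult_tail x : x \in S -> (0 < tok_mult x (tok_tail x))%N.
Proof. by rewrite /tok_mult => ->; rewrite eqxx. Qed.

Lemma tok_mult_coord i x : (i < t)%N -> x \in S ->
  (0 < tok_mult x (tok_coord i x))%N.
Proof. by move=> it xS; rewrite /tok_mult xS (bigD1 i) //= eqxx addnCA ltn_addr. Qed.

Lemma tok_mult_exists x : exists tau, (0 < tok_mult x tau)%N.
Proof.
by have [xS|xS] := boolP (x \in S); [exists (tok_tail x); apply: tok_mult_tail
                                   | exists (tok_out x); apply: tok_mult_out].
Qed.

Lemma tok_mult_out_inv x b : (0 < tok_mult x (tok_out b))%N -> x = b.
Proof.
rewrite /tok_mult; case: ifP => _; last by rewrite lt0b => /eqP[->].
by rewrite add0n => /sum_nat_gt0P[j _].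
Qed.

Lemma tok_mult_tail_inv x b : (0 < tok_mult x (tok_tail b))%N ->
  [/\ x \in S, comp x = comp b & tail x = tail b].
Proof.
rewrite /tok_mult; case: ifP => // xS.
by rewrite big1 ?addn0 => [|j _]; [rewrite lt0b => /eqP[-> ->] | case: eqP].
Qed.

Lemma tok_mult_coord_inv i x b : (0 < tok_mult x (tok_coord i b))%N ->
  [/\ x \in S, comp x = comp b & x i = b i].
Proof.
rewrite /tok_mult; case: ifP => // xS; rewrite add0n.
case/sum_nat_gt0P => j _; rewrite lt0b => /eqP[<- cx /ffunP/(_ i)].
by rewrite !swtE eqxx.
Qed.

End SwitchableSet.

Section TokenMap.
Variables (F : fieldType) (n : nat) (r : 'I_n -> nat) (t : nat) (S : {set Nset r}).
Hypothesis hS : switchable t S.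
Implicit Types (a b x y : Nset r) (i : 'I_n) (m : 'X_{1..#|Nset r|}).

Local Notation I := (Itilde F t S).

Definition tok_exp (u : 'I_#|Nset r|) (v : 'I_#|token r|) : nat :=
  tok_mult t S (enum_val u) (enum_val v).

Local Notation psi := (mexp tok_exp).

Lemma tok_expE u tau : tok_exp u (enum_rank tau) = tok_mult t S (enum_val u) tau.
Proof. by rewrite /tok_exp enum_rankK. Qed.

Lemma leq_tok_mult m x tau :
  (m (enum_rank x) * tok_mult t S x tau <= psi m (enum_rank tau))%N.
Proof. by rewrite -{2}(enum_rankK x) -tok_expE leq_mexp. Qed.

Lemma tok_exp_gt0 m tau : (0 < psi m (enum_rank tau))%N ->
  exists2 x, (0 < m (enum_rank x))%N & (0 < tok_mult t S x tau)%N.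
Proof.
by case/mexp_gt0 => u mu; rewrite tok_expE => xtau; exists (enum_val u); rewrite ?enum_valK.
Qed.

Lemma fiber_swt m x y i : (i < t)%N -> x \in S -> connect (adj S) x y -> x != y ->
  (0 < m (enum_rank x))%N -> (0 < m (enum_rank y))%N ->
  exists m', [/\ I ('X_[m] - 'X_[m']), psi m' = psi m
               & (0 < m' (enum_rank (swt i x y)))%N].
Proof.
move=> it xS xy ne_xy mx my; set m0 := (m - U_(enum_rank x) - U_(enum_rank y))%MM.
have def_m : m = (m0 + U_(enum_rank y) + U_(enum_rank x))%MM.
  by rewrite !submU1K // mnmBE mnm1E (inj_eq enum_rank_inj) (negbTE ne_xy) subn0.
exists (m0 + U_(enum_rank (swt i x y)) + U_(enum_rank (swt i y x)))%MM; split.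
- rewrite def_m !mpolyXD -!mulrA -mulrBr; apply/ideal_genMl/ideal_gen_mem.
  exists i, x, y; split=> //; first exact/connected_inP.
  by rewrite /fbin /xv [_ * 'X_[_]]mulrC.
- apply/mnmP=> j; rewrite def_m !mexpD !mnmDE !mexpU /tok_exp !enum_rankK.
  by have := tok_mult_swt hS (enum_val j) it xS xy; lia.
- by rewrite !mnmDE mnm1E eqxx; lia.
Qed.

Definition tok_sub b m := forall tau, (tok_mult t S b tau <= psi m (enum_rank tau))%N.

Definition agree_upto (k : nat) x b := [/\ x \in S, comp S x = comp S b
  & forall j : 'I_n, (t <= j)%N || (j < k)%N -> x j = b j].

Lemma fiber_reach_tail b m : b \in S -> tok_sub b m ->
  exists2 x, (0 < m (enum_rank x))%N & agree_upto 0 x b.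
Proof.
move=> bS bm; have [x mx] := tok_exp_gt0 (leq_trans (tok_mult_tail t bS) (bm _)).
case/tok_mult_tail_inv=> xS cx /ffunP tx; exists x => //; split=> // j.
by rewrite orbF => tj; have := tx j; rewrite !ffunE ltnNge tj.
Qed.

Lemma fiber_reach_step b m x k : b \in S -> tok_sub b m -> (k < t)%N ->
  (0 < m (enum_rank x))%N -> agree_upto k x b ->
  exists m' y, [/\ I ('X_[m] - 'X_[m']), psi m' = psi m,
                   (0 < m' (enum_rank y))%N & agree_upto k.+1 y b].
Proof.
move=> bS bm kt mx [xS cx xb].
have stay : agree_upto k.+1 x b -> exists m' y,
    [/\ I ('X_[m] - 'X_[m']), psi m' = psi m,
        (0 < m' (enum_rank y))%N & agree_upto k.+1 y b].
  by exists m, x; rewrite subrr; split=> //; apply: ideal_gen0.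
have [kn | nk] := ltnP k n; last first.
  apply: stay; split=> // j /orP[tj|_]; apply: xb; first by rewrite tj.
  by rewrite (leq_trans (ltn_ord j) nk) orbT.
pose i := Ordinal kn; have it : (i < t)%N by [].
have xb' j : j != i -> (t <= j)%N || (j < k.+1)%N -> x j = b j.
  move=> ne_ji /orP[tj|]; first by apply: xb; rewrite tj.
  rewrite ltnS leq_eqVlt => /orP[/eqP jk|jk]; last by apply: xb; rewrite jk orbT.
  by case/eqP: ne_ji; apply: val_inj.
have [xbi|ne_xbi] := eqVneq (x i) (b i).
  by apply: stay; split=> // j; have [->|/xb'] := eqVneq j i.
have [y my /tok_mult_coord_inv[yS cy ybi]] :=
  tok_exp_gt0 (leq_trans (tok_mult_coord it bS) (bm _)).
have xy : connect (adj S) x y by apply: connect_comp; rewrite cx cy.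
have ne_xy : x != y by apply: contra_neq ne_xbi => ->.
have [m' [mm' psim' m'y]] := fiber_swt it xS xy ne_xy mx my.
exists m', (swt i x y); split=> //; split.
- by have := swt_connect_mem hS it xS xy.
- by rewrite -cx (comp_connect (connect_swt hS it xS xy)).
- by move=> j; rewrite swtE; case: eqP => [->|/eqP/xb'].
Qed.

Lemma fiber_reach b m : b \in S -> tok_sub b m ->
  exists m', [/\ I ('X_[m] - 'X_[m']), psi m' = psi m & (0 < m' (enum_rank b))%N].
Proof.
move=> bS bm.
suff /(_ t (leqnn t)) [m' [x [mm' psim' m'x [_ _ xb]]]] : forall k, (k <= t)%N ->
    exists m' x, [/\ I ('X_[m] - 'X_[m']), psi m' = psi m,
                     (0 < m' (enum_rank x))%N & agree_upto k x b].
  exists m'; split=> //; suff <- : x = b by [].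
  by apply/ffunP=> j; apply: xb; rewrite orbC ltnNge orNb.
elim=> [_ | k IH kt].
  have [x mx xb] := fiber_reach_tail bS bm.
  by exists m, x; rewrite subrr; split=> //; apply: ideal_gen0.
have [m1 [x [mm1 psim1 m1x xb]]] := IH (ltnW kt).
have bm1 : tok_sub b m1 by move=> tau; rewrite psim1.
have [m2 [y [m1m2 psim2 m2y yb]]] := fiber_reach_step bS bm1 kt m1x xb.
exists m2, y; split=> //; last by rewrite psim2.
exact: ideal_genB_trans mm1 m1m2.
Qed.

Lemma Itilde_fiber m m' : psi m = psi m' -> I ('X_[m] - 'X_[m']).
Proof.
move dm': (mdeg m') => d; elim: d m m' dm' => [|d IH] m m' dm' psimm'.
  have m'0 : m' = 0%MM by apply/eqP; rewrite -mdeg_eq0 dm'.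
  suff -> : m = m' by rewrite subrr; apply: ideal_gen0.
  apply/mnmP=> u; rewrite m'0 mnm0E; apply/eqP; rewrite -leqn0 leqNgt; apply/negP => mu.
  have [tau xtau] := tok_mult_exists t S (enum_val u).
  have := leq_tok_mult m (enum_val u) tau.
  by rewrite psimm' m'0 mexp0 mnm0E enum_valK leqn0 muln_eq0 => /orP[] /eqP; lia.
have /sum_nat_gt0P[u _ m'u] : (0 < \sum_i m' i)%N by rewrite -mdegE dm'.
set b := enum_val u.
have bm : tok_sub b m.
  move=> tau; rewrite psimm'; apply: leq_trans (leq_tok_mult m' b tau).
  by rewrite enum_valK leq_pmull.
have [m2 [mm2 psim2 m2u]] :
    exists m2, [/\ I ('X_[m] - 'X_[m2]), psi m2 = psi m & (0 < m2 u)%N].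
  have [bS|bS] := boolP (b \in S).
    by have [m2] := fiber_reach bS bm; rewrite enum_valK; exists m2.
  exists m; rewrite subrr; split=> //; first exact: ideal_gen0.
  have [x mx /tok_mult_out_inv xb] := tok_exp_gt0 (leq_trans (tok_mult_out t bS) (bm _)).
  by rewrite -[u]enum_valK -/b -xb.
apply: ideal_genB_trans mm2 _.
rewrite -(submU1K m2u) -(submU1K m'u) !mpolyXD -mulrBl mulrC; apply: ideal_genMl.
apply: IH; first by move: dm'; rewrite -{1}(submU1K m'u) mdegD mdeg1 addn1 => -[].
move: psimm'; rewrite -psim2 -{1}(submU1K m2u) -{1}(submU1K m'u) !mexpD.
by move/(congr1 (fun v => v - psi U_(u))%MM); rewrite !addmK.
Qed.

Lemma Itilde_kernel p : I p <-> p \mPo msubst F tok_exp = 0.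
Proof.
split; last exact/msubst_kernel/Itilde_fiber.
apply: ideal_gen_eq0 => _ [i [a [b [it /connected_inP[aS ab] ->]]]].
rewrite /fbin /xv -!mpolyXD rmorphB /= !msubstX; apply/eqP; rewrite subr_eq0; apply/eqP.
congr 'X_[_]; apply/mnmP=> j; rewrite !mexpD !mnmDE !mexpU /tok_exp !enum_rankK.
exact/esym/tok_mult_swt.
Qed.

Lemma Itilde_prime : prime_ideal I.
Proof. exact: prime_ideal_kernel Itilde_kernel. Qed.

End TokenMap.

Section RestrictToS.
Variables (F : fieldType) (n : nat) (r : 'I_n -> nat) (t : nat) (S : {set Nset r}).
Hypothesis hS : switchable t S.

Definition restrS : #|Nset r|.-tuple (polyR F r) :=
  [tuple if enum_val u \in S then 'X_u else 0 | u < #|Nset r|].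

Lemma restrS_xv a : xv F a \mPo restrS = if a \in S then xv F a else 0.
Proof. by rewrite /xv comp_mpolyXU -tnth_nth tnth_mktuple enum_rankK. Qed.

Lemma VarS_X_subr_restrS (m : 'X_{1..#|Nset r|}) :
  VarS F S ('X_[m] - ('X_[m] \mPo restrS)).
Proof.
rewrite comp_mpolyX.
have [u /andP[mu uS] | allS] := pickP (fun u => (0 < m u)%N && (enum_val u \notin S)).
  rewrite (bigD1 u) //= tnth_mktuple (negbTE uS) expr0n eqn0Ngt mu mul0r subr0.
  rewrite -(submU1K mu) mpolyXD; apply/ideal_genMl/ideal_gen_mem.
  by exists (enum_val u); rewrite /xv enum_valK.
rewrite (eq_bigr (fun u => 'X_u ^+ m u)) -?mpolyXE_id ?subrr; first exact: ideal_gen0.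
move=> u _; rewrite tnth_mktuple; case: ifP => // uS.
by have := allS u; rewrite uS andbT; case: (m u).
Qed.

Lemma VarS_subr_restrS p : VarS F S (p - (p \mPo restrS)).
Proof.
rewrite {1}(mpolyE p) comp_mpolyEX -sumrB; apply: ideal_gen_sum => m _.
by rewrite -scalerBr -mul_mpolyC; apply/ideal_genMl/VarS_X_subr_restrS.
Qed.

Lemma PS_restrS p : PS F t S p <-> Itilde F t S (p \mPo restrS).
Proof.
split=> [[u [v [Vu Iv ->]]] | Ip]; last first.
  exists (p - (p \mPo restrS)), (p \mPo restrS); rewrite subrK; split=> //.
  exact: VarS_subr_restrS.
rewrite rmorphD (ideal_gen_eq0 _ Vu) ?add0r => [|_ [a [aS ->]]]; last first.
  by rewrite /= restrS_xv (negbTE aS).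
apply: ideal_gen_map Iv => _ [i [a [b [it ab ->]]]]; apply: ideal_gen_mem.
exists i, a, b; split=> //.
have /connected_inP[aS ab'] := ab; have bS := connect_adj_mem aS ab'.
have ba : connect (adj S) b a by rewrite connect_adj_sym.
by rewrite /fbin rmorphB !rmorphM /= !restrS_xv aS bS !(swt_connect_mem hS).
Qed.

Lemma PS_prime : prime_ideal (PS F t S).
Proof. exact: prime_ideal_preimage (Itilde_prime F hS) PS_restrS. Qed.

End RestrictToS.

Theorem theorem4p5 (F : fieldType) (n : nat) (r : 'I_n -> nat)
  (hr : forall i, (0 < r i)%N) (t : nat) (ht : (1 <= t <= n)%N)
  (S : {set Nset r}) (hS : switchable t S) :
  prime_ideal (Itilde F t S) /\ prime_ideal (PS F t S).
Proof. by split; [apply: Itilde_prime | apply: PS_prime]. Qed.
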